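(* Let $\mathfrak g$ be a unimodular Lie algebra with a Hermitian structure $(J,g)$ and let $e$ be a unitary frame. If $D^j_{ik}=D^j_{ki}$ for all $i,j,k$, then the Chern scalar curvature satisfies $s=-\sum_{r,s,t}|D^t_{rs}|^2\le0$, with $s<0$ unless $D=0$. If $D^j_{ik}=-D^j_{ki}$ for all $i,j,k$, then $s=\sum_{r,s,t}|D^t_{rs}|^2\ge0$, with $s>0$ unless $D=0$.
   Context: Hermitian structure on a real Lie algebra $\mathfrak g$ of dimension $2n$: integrable almost complex structure $J$ and $J$-invariant inner product $g$. Unimodular: $\operatorname{tr}\mathrm{ad}_x=0$ for all $x$. $\mathfrak g^{1,0}=\{x-\sqrt{-1}Jx\}$, $g$ extended bilinearly, unitary frame $e_1,\dots,e_n$. $D^j_{ik}=g([\bar e_j,e_k],e_i)$. $R$ is the curvature of the Chern connection (unique connection preserving $J,g$ with torsion of vanishing $(1,1)$-part), $R_{i\bar jk\bar\ell}=g(R(e_i,\bar e_j)e_k,\bar e_\ell)$, and the Chern scalar curvature is $s=\sum_{i,r}R_{i\bar ir\bar r}$. *)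

From HB Require Import structures.
From mathcomp Require Import all_boot all_order all_algebra.
From mathcomp Require Import complex.
Set Implicit Arguments. Unset Strict Implicit. Unset Printing Implicit Defensive.
Import Order.TTheory GRing.Theory Num.Theory.
Local Open Scope ring_scope.

(* A real Lie algebra of dimension m is modelled on R^m (row vectors
   'rV[R]_m) through its structure constants c : [b_i, b_j] = c i j,
   where b_i is the standard basis.  Every real bilinear/linear datum
   (bracket, J, g, connection) is given by real coefficients; the same
   formulas with the coefficients embedded by [emb] give the real
   objects (K = R, emb = id) or their C-(bi)linear extensions to the
   complexification C^m (K = R[i], emb = real embedding). *)

Definition cR {R : rcfType} (r : R) : R[i] := Complex r 0.

Section Defs.
Variables (R : rcfType) (m : nat).


Definition bilin (K : comNzRingType) (emb : R -> K)
  (B : 'I_m -> 'I_m -> 'rV[R]_m) (x y : 'rV[K]_m) : 'rV[K]_m :=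
  \sum_(i < m) \sum_(j < m) (x 0 i * y 0 j) *: map_mx emb (B i j).

Definition linop (K : comNzRingType) (emb : R -> K) (A : 'M[R]_m)
  (x : 'rV[K]_m) : 'rV[K]_m := x *m map_mx emb A.

(* bilinear form with Gram matrix G (extended bilinearly, not sesquilinearly) *)
Definition bform (K : comNzRingType) (emb : R -> K) (G : 'M[R]_m)
  (x y : 'rV[K]_m) : K := (x *m map_mx emb G *m y^T) 0 0.

Definition is_lie_algebra (c : 'I_m -> 'I_m -> 'rV[R]_m) : Prop :=
  (forall x y : 'rV[R]_m, bilin id c x y = - bilin id c y x) /\
  (forall x y z : 'rV[R]_m,
      bilin id c x (bilin id c y z) + bilin id c y (bilin id c z x)
      + bilin id c z (bilin id c x y) = 0).

Definition ad_mx (c : 'I_m -> 'I_m -> 'rV[R]_m) (x : 'rV[R]_m) : 'M[R]_m :=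
  \matrix_(k, l) bilin id c x (delta_mx 0 k) 0 l.

Definition unimodular (c : 'I_m -> 'I_m -> 'rV[R]_m) : Prop :=
  forall x : 'rV[R]_m, \tr (ad_mx c x) = 0.

Definition almost_complex (J : 'M[R]_m) : Prop := J *m J = - 1%:M.

Definition nijenhuis_free (c : 'I_m -> 'I_m -> 'rV[R]_m) (J : 'M[R]_m) : Prop :=
  forall x y : 'rV[R]_m,
    bilin id c (linop id J x) (linop id J y)
    - linop id J (bilin id c (linop id J x) y)
    - linop id J (bilin id c x (linop id J y))
    - bilin id c x y = 0.

Definition J_inner_product (J G : 'M[R]_m) : Prop :=
  (forall x y : 'rV[R]_m, bform id G x y = bform id G y x) /\
  (forall x : 'rV[R]_m, x != 0 -> 0 < bform id G x x) /\
  (forall x y : 'rV[R]_m, bform id G (linop id J x) (linop id J y) = bform id G x y).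

Definition cplx (x : 'rV[R]_m) : 'rV[R[i]]_m := map_mx cR x.
Definition cconj (z : 'rV[R[i]]_m) : 'rV[R[i]]_m := map_mx Num.conj z.

Definition in10 (J : 'M[R]_m) (z : 'rV[R[i]]_m) : Prop :=
  exists x : 'rV[R]_m, z = cplx x - 'i *: linop cR J (cplx x).

(* torsion and curvature of the (left-invariant) connection with
   nabla_{b_i} b_j = Gam i j, over K *)
Definition torsion (K : comNzRingType) (emb : R -> K)
  (c Gam : 'I_m -> 'I_m -> 'rV[R]_m) (x y : 'rV[K]_m) : 'rV[K]_m :=
  bilin emb Gam x y - bilin emb Gam y x - bilin emb c x y.

Definition curvature (K : comNzRingType) (emb : R -> K)
  (c Gam : 'I_m -> 'I_m -> 'rV[R]_m) (x y z : 'rV[K]_m) : 'rV[K]_m :=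
  bilin emb Gam x (bilin emb Gam y z) - bilin emb Gam y (bilin emb Gam x z)
  - bilin emb Gam (bilin emb c x y) z.

(* Gam is the Chern connection of (J, g): nabla J = 0, nabla g = 0, and the
   torsion has vanishing (1,1)-part: T(Z, conj W) = 0 for Z, W in g^{1,0}.
   (The Chern connection is unique, so quantifying over all such Gam is
   the same as taking the Chern connection.) *)
Definition is_chern (c : 'I_m -> 'I_m -> 'rV[R]_m) (J G : 'M[R]_m)
  (Gam : 'I_m -> 'I_m -> 'rV[R]_m) : Prop :=
  (forall x y : 'rV[R]_m,
      bilin id Gam x (linop id J y) = linop id J (bilin id Gam x y)) /\
  (forall x y z : 'rV[R]_m,
      bform id G (bilin id Gam x y) z + bform id G y (bilin id Gam x z) = 0) /\
  (forall Z W : 'rV[R[i]]_m, in10 J Z -> in10 J W ->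
      torsion cR c Gam Z (cconj W) = 0).

End Defs.

Section Frame.
Variables (R : rcfType) (n : nat).
Local Notation m := (n.*2).

Definition unitary_frame (J G : 'M[R]_m) (e : 'I_n -> 'rV[R[i]]_m) : Prop :=
  (forall i, in10 J (e i)) /\
  (forall i j, bform cR G (e i) (cconj (e j)) = (i == j)%:R).

Definition Dcoef (c : 'I_m -> 'I_m -> 'rV[R]_m) (G : 'M[R]_m)
  (e : 'I_n -> 'rV[R[i]]_m) (j i k : 'I_n) : R[i] :=
  bform cR G (bilin cR c (cconj (e j)) (e k)) (e i).

Definition Rcoef (c Gam : 'I_m -> 'I_m -> 'rV[R]_m) (G : 'M[R]_m)
  (e : 'I_n -> 'rV[R[i]]_m) (i j k l : 'I_n) : R[i] :=
  bform cR G (curvature cR c Gam (e i) (cconj (e j)) (e k)) (cconj (e l)).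

Definition chern_scalar (c Gam : 'I_m -> 'I_m -> 'rV[R]_m) (G : 'M[R]_m)
  (e : 'I_n -> 'rV[R[i]]_m) : R[i] :=
  \sum_(i < n) \sum_(r < n) Rcoef c Gam G e i i r r.

End Frame.

From HB Require Import structures.
From mathcomp Require Import all_boot all_order all_algebra.
From mathcomp Require Import complex.
From mathcomp Require Import ring.
Import Order.TTheory GRing.Theory Num.Theory.
Local Open Scope ring_scope.
Set Implicit Arguments. Unset Strict Implicit. Unset Printing Implicit Defensive.

(* Everything is computed in the complexification C^m,
   where all real data are extended C-(bi)linearly.
   1. Each real axiom (skew-symmetry and Jacobi identity of the bracket,
      J^2 = -1, integrability, J-invariance and symmetry of g, the Chern
      conditions) extends to complex vectors: both sides are multilinear and
      agree on the standard basis.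
   2. Vectors of type (1,0) (Jz = iz) are g-isotropic, so (e, ebar) is a
      basis of C^m with g-dual basis (ebar, e).  This expands any linear
      functional, and any trace, in the unitary frame.
   3. The Chern conditions express the connection in the frame through the
      bracket coefficients D^j_{ik}, Q_{jkl} = g([ebar_j,e_k],ebar_l) and
      C_{tsp} = g([e_t,e_s],ebar_p); hence R_{i ibar r rbar} is a quadratic
      expression in them.  Summing over i, r and using the Jacobi identity
      and unimodularity (an abstract algebraic identity, proved separately)
      gives s = sum_{t,r,s} D^t_{rs} Q_{rts}, and Q_{rts} = - conj D^t_{sr}.
   4. Under D^t_{rs} = +-D^t_{sr} this is -+ sum |D^t_{rs}|^2. *)

HB.instance Definition _ (R : rcfType) :=
  GRing.RMorphism.copy (@cR R) (real_complex R).

Section SumOfSquares.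
Variables (F : numDomainType) (n : nat) (D : 'I_n -> 'I_n -> 'I_n -> F).

Lemma sum3_sqr_ge0 : 0 <= \sum_r \sum_s \sum_t `|D t r s| ^+ 2.
Proof. by do 3! (apply: sumr_ge0 => ? _); rewrite exprn_ge0. Qed.

Lemma sum_gt0_witness (I : finType) (f : I -> F) (i0 : I) :
  (forall i, 0 <= f i) -> 0 < f i0 -> 0 < \sum_i f i.
Proof.
move=> f_ge0 fi0_gt0; rewrite (bigD1 i0) //=; apply: (lt_le_trans fi0_gt0).
by rewrite lerDl; apply: sumr_ge0 => i _.
Qed.

Lemma sum3_sqr_gt0 : (exists j i k, D j i k != 0) ->
  0 < \sum_r \sum_s \sum_t `|D t r s| ^+ 2.
Proof.
case=> j [i [k nz]].
apply: (@sum_gt0_witness _ _ i) => [r|].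
  by do 2! (apply: sumr_ge0 => ? _); rewrite exprn_ge0.
apply: (@sum_gt0_witness _ _ k) => [s|]; first by apply: sumr_ge0 => ? _; rewrite exprn_ge0.
apply: (@sum_gt0_witness _ _ j) => [t|]; first by rewrite exprn_ge0.
by rewrite exprn_gt0 // normr_gt0.
Qed.

End SumOfSquares.

(* The algebraic heart of the computation: if arrays D, Q, Cf satisfy the
   frame form of the Jacobi identity (for ebar_t, e_t, e_s, paired with
   ebar_s) and of unimodularity (trace of ad e_p), then the sum of the frame
   expressions of R_{i ibar r rbar} equals sum D^t_{rs} Q_{rts}. *)
Section FrameIdentity.
Variables (K : comNzRingType) (n : nat) (D Q Cf : 'I_n -> 'I_n -> 'I_n -> K).

Hypothesis jacobi : forall t s,
  \sum_p Cf t s p * Q t p s - \sum_p Q t s p * Cf t p s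
  + \sum_p D t p s * Q p t s - \sum_p Q t t p * Cf p s s
  - \sum_p D t p t * Q p s s = 0.
Hypothesis unimod : forall p, \sum_s Cf p s s = \sum_s D s s p.

Let W := \sum_t (\sum_p Q t t p * \sum_s D s s p + \sum_p D t p t * \sum_s Q p s s).

Lemma curvature_sum_W : \sum_i \sum_r
  (\sum_l Q i r l * D r l i - \sum_l D l r i * Q i l r
   + \sum_p Q i i p * D r r p + \sum_p D i p i * Q p r r) = W.
Proof.
apply: eq_bigr => i _; rewrite !big_split /= sumrN.
have -> : \sum_r \sum_l Q i r l * D r l i = \sum_r \sum_l D l r i * Q i l r.
  by rewrite exchange_big; do 2! apply: eq_bigr => ? _; rewrite mulrC.
rewrite subrr add0r; congr (_ + _); rewrite exchange_big; apply: eq_bigr => p _.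
  by rewrite mulr_sumr.
by rewrite mulr_sumr; apply: eq_bigr => r _.
Qed.

Lemma jacobi_sum_W : \sum_t \sum_r \sum_s D t r s * Q r t s = W.
Proof.
apply: eq_bigr => t _.
have sum_jacobi : \sum_s (\sum_p Cf t s p * Q t p s - \sum_p Q t s p * Cf t p s
  + \sum_p D t p s * Q p t s - \sum_p Q t t p * Cf p s s
  - \sum_p D t p t * Q p s s) = 0.
  by apply: big1 => s _; apply: jacobi.
rewrite !(sumrB, big_split) /= in sum_jacobi.
have swap_Cf : \sum_s \sum_p Cf t s p * Q t p s = \sum_s \sum_p Q t s p * Cf t p s.
  by rewrite exchange_big; do 2! apply: eq_bigr => ? _; rewrite mulrC.
have swap_DQ : \sum_s \sum_p D t p s * Q p t s = \sum_r \sum_s D t r s * Q r t s.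
  exact: exchange_big.
have trace_Cf : \sum_s \sum_p Q t t p * Cf p s s = \sum_p Q t t p * \sum_s D s s p.
  by rewrite exchange_big; apply: eq_bigr => p _; rewrite -unimod mulr_sumr.
have trace_Q : \sum_s \sum_p D t p t * Q p s s = \sum_p D t p t * \sum_s Q p s s.
  by rewrite exchange_big; apply: eq_bigr => p _; rewrite mulr_sumr.
rewrite swap_Cf subrr add0r swap_DQ trace_Cf trace_Q in sum_jacobi.
by move/eqP: sum_jacobi; rewrite -addrA -opprD subr_eq0 => /eqP.
Qed.

Lemma curvature_sum_DQ : \sum_i \sum_r
  (\sum_l Q i r l * D r l i - \sum_l D l r i * Q i l r
   + \sum_p Q i i p * D r r p + \sum_p D i p i * Q p r r)
  = \sum_t \sum_r \sum_s D t r s * Q r t s.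
Proof. by rewrite curvature_sum_W jacobi_sum_W. Qed.

End FrameIdentity.

Section Complexification.
Variables (R : rcfType) (m : nat).
Local Notation C := R[i].
Implicit Types (K : comNzRingType) (B : 'I_m -> 'I_m -> 'rV[R]_m).

Lemma conj_cR (a : R) : (cR a)^* = cR a.
Proof. exact: conjc_real. Qed.

Lemma scale_addACA (S : pzRingType) (V : lmodType S) (a : S) (u u' v v' : V) :
  (a *: u + u') + (a *: v + v') = a *: (u + v) + (u' + v').
Proof. by rewrite addrACA scalerDr. Qed.

Lemma scale_subACA (S : pzRingType) (V : lmodType S) (a : S) (u u' v v' : V) :
  (a *: u + u') - (a *: v + v') = a *: (u - v) + (u' - v').
Proof. by rewrite opprD addrACA scalerBr. Qed.

Lemma bilinDl K (emb : R -> K) B (a : K) (x x' y : 'rV[K]_m) :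
  bilin emb B (a *: x + x') y = a *: bilin emb B x y + bilin emb B x' y.
Proof.
rewrite /bilin scaler_sumr -big_split; apply: eq_bigr => i _.
rewrite scaler_sumr -big_split; apply: eq_bigr => j _.
by rewrite !mxE mulrDl scalerDl scalerA mulrA.
Qed.

Lemma bilinDr K (emb : R -> K) B (a : K) (x y y' : 'rV[K]_m) :
  bilin emb B x (a *: y + y') = a *: bilin emb B x y + bilin emb B x y'.
Proof.
rewrite /bilin scaler_sumr -big_split; apply: eq_bigr => i _.
rewrite scaler_sumr -big_split; apply: eq_bigr => j _.
by rewrite !mxE mulrDr scalerDl scalerA mulrCA.
Qed.

Lemma linopD K (emb : R -> K) (A : 'M[R]_m) (a : K) (x x' : 'rV[K]_m) :
  linop emb A (a *: x + x') = a *: linop emb A x + linop emb A x'.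
Proof. by rewrite /linop mulmxDl scalemxAl. Qed.

Lemma bformDl K (emb : R -> K) (G : 'M[R]_m) (a : K) (x x' y : 'rV[K]_m) :
  bform emb G (a *: x + x') y = a * bform emb G x y + bform emb G x' y.
Proof. by rewrite /bform !mulmxDl -!scalemxAl !mxE. Qed.

Lemma bformDr K (emb : R -> K) (G : 'M[R]_m) (a : K) (x y y' : 'rV[K]_m) :
  bform emb G x (a *: y + y') = a * bform emb G x y + bform emb G x y'.
Proof. by rewrite /bform linearD linearZ /= mulmxDr -!scalemxAr !mxE. Qed.

Lemma bilinZl K (emb : R -> K) B (a : K) (x y : 'rV[K]_m) :
  bilin emb B (a *: x) y = a *: bilin emb B x y.
Proof.
rewrite /bilin scaler_sumr; apply: eq_bigr => i _; rewrite scaler_sumr.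
by apply: eq_bigr => j _; rewrite !mxE scalerA mulrA.
Qed.

Lemma bilinZr K (emb : R -> K) B (a : K) (x y : 'rV[K]_m) :
  bilin emb B x (a *: y) = a *: bilin emb B x y.
Proof.
rewrite /bilin scaler_sumr; apply: eq_bigr => i _; rewrite scaler_sumr.
by apply: eq_bigr => j _; rewrite !mxE scalerA mulrCA.
Qed.

Lemma cplx_delta k : map_mx cR (delta_mx 0 k : 'rV[R]_m) = delta_mx 0 k.
Proof. by apply/matrixP => a b; rewrite !mxE; case: (_ && _); rewrite ?rmorph1 ?rmorph0. Qed.

Lemma bilin_cplx B (x y : 'rV[R]_m) :
  bilin cR B (map_mx cR x) (map_mx cR y) = map_mx cR (bilin id B x y).
Proof.
apply/matrixP => a b; rewrite /bilin !mxE !summxE rmorph_sum; apply: eq_bigr => i _.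
rewrite !summxE rmorph_sum; apply: eq_bigr => j _.
by rewrite !mxE !rmorphM.
Qed.

Lemma linop_cplx (A : 'M[R]_m) (x : 'rV[R]_m) :
  linop cR A (map_mx cR x) = map_mx cR (linop id A x).
Proof. by rewrite /linop map_mxM map_mx_id. Qed.

Lemma bform_cplx (G : 'M[R]_m) (x y : 'rV[R]_m) :
  bform cR G (map_mx cR x) (map_mx cR y) = cR (bform id G x y).
Proof. by rewrite /bform map_mx_id // (map_trmx cR y) -!map_mxM mxE. Qed.

Lemma linear_sum (V : lmodType C) (f : 'rV[C]_m -> V) :
  (forall a x y, f (a *: x + y) = a *: f x + f y) ->
  forall (I : finType) (a : I -> C) (v : I -> 'rV[C]_m),
  f (\sum_i a i *: v i) = \sum_i a i *: f (v i).
Proof.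
move=> f_lin I a v; have f0 : f 0 = 0.
  have := f_lin 1 0 0; rewrite scaler0 add0r scale1r.
  by move/(congr1 (fun u => u - f 0)); rewrite addrK subrr.
by elim/big_rec2: _ => [//|k u w _ <-]; rewrite f_lin.
Qed.

Lemma linear_sum_scalar (f : 'rV[C]_m -> C) :
  (forall a x y, f (a *: x + y) = a * f x + f y) ->
  forall (I : finType) (a : I -> C) (v : I -> 'rV[C]_m),
  f (\sum_i a i *: v i) = \sum_i a i * f (v i).
Proof. exact: (@linear_sum C^o f). Qed.

Lemma linear_basis_zero (V : lmodType C) (T : 'rV[C]_m -> V) :
  (forall a x x', T (a *: x + x') = a *: T x + T x') ->
  (forall i, T (delta_mx 0 i) = 0) -> forall x, T x = 0.
Proof.
move=> T_lin T0 x; rewrite (row_sum_delta x) (linear_sum T_lin).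
by apply: big1 => i _; rewrite T0 scaler0.
Qed.

Lemma bilinear_basis_zero (V : lmodType C) (T : 'rV[C]_m -> 'rV[C]_m -> V) :
  (forall a x x' y, T (a *: x + x') y = a *: T x y + T x' y) ->
  (forall a x y y', T x (a *: y + y') = a *: T x y + T x y') ->
  (forall i j, T (delta_mx 0 i) (delta_mx 0 j) = 0) ->
  forall x y, T x y = 0.
Proof.
move=> T_lin1 T_lin2 T0 x y.
apply: (@linear_basis_zero _ (T^~ y)) => [a x0 x1|i]; first exact: T_lin1.
exact: (@linear_basis_zero _ (T _)).
Qed.

Lemma trilinear_basis_zero (V : lmodType C)
    (T : 'rV[C]_m -> 'rV[C]_m -> 'rV[C]_m -> V) :
  (forall a x x' y z, T (a *: x + x') y z = a *: T x y z + T x' y z) ->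
  (forall a x y y' z, T x (a *: y + y') z = a *: T x y z + T x y' z) ->
  (forall a x y z z', T x y (a *: z + z') = a *: T x y z + T x y z') ->
  (forall i j k, T (delta_mx 0 i) (delta_mx 0 j) (delta_mx 0 k) = 0) ->
  forall x y z, T x y z = 0.
Proof.
move=> T_lin1 T_lin2 T_lin3 T0 x y z.
apply: (@linear_basis_zero _ (fun x => T x y z)) => [a x0 x1|i]; first exact: T_lin1.
exact: (@bilinear_basis_zero _ (T _)).
Qed.

Lemma bilinear_basis_zero_scalar (T : 'rV[C]_m -> 'rV[C]_m -> C) :
  (forall a x x' y, T (a *: x + x') y = a * T x y + T x' y) ->
  (forall a x y y', T x (a *: y + y') = a * T x y + T x y') ->
  (forall i j, T (delta_mx 0 i) (delta_mx 0 j) = 0) ->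
  forall x y, T x y = 0.
Proof. exact: (@bilinear_basis_zero C^o T). Qed.

Lemma trilinear_basis_zero_scalar (T : 'rV[C]_m -> 'rV[C]_m -> 'rV[C]_m -> C) :
  (forall a x x' y z, T (a *: x + x') y z = a * T x y z + T x' y z) ->
  (forall a x y y' z, T x (a *: y + y') z = a * T x y z + T x y' z) ->
  (forall a x y z z', T x y (a *: z + z') = a * T x y z + T x y z') ->
  (forall i j k, T (delta_mx 0 i) (delta_mx 0 j) (delta_mx 0 k) = 0) ->
  forall x y z, T x y z = 0.
Proof. exact: (@trilinear_basis_zero C^o T). Qed.

End Complexification.

Section ChernScalar.
Variables (R : rcfType) (n : nat).
Local Notation m := (n.*2).
Local Notation C := R[i].
Variables (c : 'I_m -> 'I_m -> 'rV[R]_m) (J G : 'M[R]_m)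
  (Gam : 'I_m -> 'I_m -> 'rV[R]_m) (e : 'I_n -> 'rV[C]_m).
Hypotheses (Hlie : is_lie_algebra c) (Huni : unimodular c)
  (Hac : almost_complex J) (Hnij : nijenhuis_free c J)
  (Hip : J_inner_product J G) (Hch : is_chern c J G Gam)
  (Hfr : unitary_frame J G e).

Local Notation br := (bilin cR c).
Local Notation nab := (bilin cR Gam).
Local Notation Jc := (linop cR J).
Local Notation gc := (bform cR G).
Local Notation eb i := (cconj (e i)).
Local Notation D := (Dcoef c G e).
Implicit Types (x y z w : 'rV[C]_m) (a : C).

(* closes the linearity side conditions of the *_basis_zero lemmas *)
Ltac multilinear := rewrite ?(bilinDl, bilinDr, linopD, bformDl, bformDr);
  rewrite ?scale_addACA ?scale_subACA //; try ring.
(* rewrites the complexified data on standard basis vectors into real data *)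
Ltac on_real_basis := rewrite -!cplx_delta !(linop_cplx, bilin_cplx, bform_cplx).

Lemma gc_sym x y : gc x y = gc y x.
Proof.
apply/eqP; rewrite -subr_eq0; apply/eqP; move: x y.
apply: bilinear_basis_zero_scalar => [a x x' y|a x y y'|i j]; try by multilinear.
by on_real_basis; rewrite Hip.1 subrr.
Qed.

Lemma gc_J x y : gc (Jc x) (Jc y) = gc x y.
Proof.
apply/eqP; rewrite -subr_eq0; apply/eqP; move: x y.
apply: bilinear_basis_zero_scalar => [a x x' y|a x y y'|i j]; try by multilinear.
by on_real_basis; rewrite Hip.2.2 subrr.
Qed.

Lemma Jc_sq x : Jc (Jc x) = - x.
Proof.
apply/eqP; rewrite -subr_eq0 opprK; apply/eqP; move: x.
apply: linear_basis_zero => [a x x'|i]; first by multilinear.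
on_real_basis; rewrite -map_mxD /linop map_mx_id // -mulmxA Hac.
by rewrite mulmxN mulmx1 addNr map_mx0.
Qed.

Lemma br_anti x y : br x y = - br y x.
Proof.
apply/eqP; rewrite -subr_eq0 opprK; apply/eqP; move: x y.
apply: bilinear_basis_zero => [a x x' y|a x y y'|i j]; try by multilinear.
by on_real_basis; rewrite (Hlie.1 'e_i) map_mxN addNr.
Qed.

Lemma br_jacobi x y z : br x (br y z) + br y (br z x) + br z (br x y) = 0.
Proof.
move: x y z; apply: trilinear_basis_zero => [a x x' y z|a x y y' z|a x y z z'|i j k];
  try by multilinear.
by on_real_basis; rewrite -!map_mxD Hlie.2 map_mx0.
Qed.

Lemma br_integrable x y :
  br (Jc x) (Jc y) - Jc (br (Jc x) y) - Jc (br x (Jc y)) - br x y = 0.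
Proof.
move: x y; apply: bilinear_basis_zero => [a x x' y|a x y y'|i j]; try by multilinear.
by on_real_basis; rewrite -!map_mxB Hnij map_mx0.
Qed.

Lemma nab_J x y : nab x (Jc y) = Jc (nab x y).
Proof.
apply/eqP; rewrite -subr_eq0; apply/eqP; move: x y.
apply: bilinear_basis_zero => [a x x' y|a x y y'|i j]; try by multilinear.
by on_real_basis; rewrite Hch.1 subrr.
Qed.

Lemma nab_metric x y z : gc (nab x y) z + gc y (nab x z) = 0.
Proof.
move: x y z; apply: trilinear_basis_zero_scalar => [a x x' y z|a x y y' z|a x y z z'|i j k];
  try by multilinear.
by on_real_basis; rewrite -rmorphD Hch.2.1 rmorph0.
Qed.

Lemma gc0l y : gc 0 y = 0.
Proof. by rewrite /bform !mul0mx mxE. Qed.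
Lemma gc0r x : gc x 0 = 0.
Proof. by rewrite /bform trmx0 mulmx0 mxE. Qed.
Lemma gcZl a x y : gc (a *: x) y = a * gc x y.
Proof. by have := bformDl cR G a x 0 y; rewrite !addr0 gc0l addr0. Qed.
Lemma gcZr a x y : gc x (a *: y) = a * gc x y.
Proof. by have := bformDr cR G a x y 0; rewrite !addr0 gc0r addr0. Qed.
Lemma gcDl x x' y : gc (x + x') y = gc x y + gc x' y.
Proof. by have := bformDl cR G 1 x x' y; rewrite scale1r mul1r. Qed.
Lemma gcDr x y y' : gc x (y + y') = gc x y + gc x y'.
Proof. by have := bformDr cR G 1 x y y'; rewrite scale1r mul1r. Qed.
Lemma gcNl x y : gc (- x) y = - gc x y.
Proof. by rewrite -scaleN1r gcZl mulN1r. Qed.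
Lemma gcBl x x' y : gc (x - x') y = gc x y - gc x' y.
Proof. by rewrite gcDl gcNl. Qed.

Lemma JcZ a x : Jc (a *: x) = a *: Jc x.
Proof. by rewrite /linop scalemxAl. Qed.
Lemma JcB x y : Jc (x - y) = Jc x - Jc y.
Proof. by rewrite /linop mulmxBl. Qed.

Lemma gc_Jskew x y : gc (Jc x) y = - gc x (Jc y).
Proof. by rewrite -gc_J Jc_sq gcNl. Qed.

Lemma cconjK x : cconj (cconj x) = x.
Proof. by apply/matrixP => a b; rewrite !mxE conjCK. Qed.
Lemma cconjZ a x : cconj (a *: x) = a^* *: cconj x.
Proof. by apply/matrixP => p q; rewrite !mxE rmorphM. Qed.
Lemma cconj_Jc x : cconj (Jc x) = Jc (cconj x).
Proof.
apply/matrixP => p q; rewrite /linop !mxE rmorph_sum; apply: eq_bigr => k _.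
by rewrite rmorphM !mxE; congr (_ * _); apply: conj_cR.
Qed.
Lemma cconj_br x y : cconj (br x y) = br (cconj x) (cconj y).
Proof.
apply/matrixP => p q; rewrite /bilin !mxE !summxE rmorph_sum; apply: eq_bigr => i _.
rewrite !summxE rmorph_sum; apply: eq_bigr => j _.
by rewrite !mxE !rmorphM; congr (_ * _); apply: conj_cR.
Qed.
Lemma conj_gc x y : (gc x y)^* = gc (cconj x) (cconj y).
Proof.
rewrite /bform !mxE rmorph_sum; apply: eq_bigr => i _.
rewrite rmorphM !mxE rmorph_sum; congr (_ * _); apply: eq_bigr => j _.
by rewrite !mxE rmorphM; congr (_ * _); apply: conj_cR.
Qed.

Lemma Jc_e l : Jc (e l) = 'i *: e l.
Proof.
have [x ->] := Hfr.1 l; rewrite JcB JcZ Jc_sq /cplx scalerN opprK scalerBr scalerA.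
by rewrite -expr2 sqrCi scaleN1r opprK addrC.
Qed.

Lemma Jc_eb l : Jc (eb l) = - 'i *: eb l.
Proof. by rewrite -cconj_Jc Jc_e cconjZ conjCi. Qed.

Lemma isotropic10 w l : Jc w = 'i *: w -> gc w (e l) = 0.
Proof.
move=> Jw; have := gc_Jskew w (e l); rewrite Jw Jc_e gcZl gcZr => skew.
have : ('i + 'i) * gc w (e l) = 0 by rewrite mulrDl {1}skew addNr.
move/eqP; rewrite mulf_eq0 => /orP[|/eqP //].
by rewrite -mulr2n mulrn_eq0 /= (negPf (neq0Ci _)).
Qed.

Lemma isotropic01 w l : Jc w = - 'i *: w -> gc w (eb l) = 0.
Proof.
move=> Jw; have : Jc (cconj w) = 'i *: cconj w.
  by rewrite -cconj_Jc Jw cconjZ -conjCi conjCK.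
by move/isotropic10 => /(_ l) /(congr1 Num.conj); rewrite conj_gc cconjK rmorph0.
Qed.

Definition Ee : 'M[C]_(n, m) := \matrix_(i, k) e i 0 k.
Definition Eb : 'M[C]_(n, m) := \matrix_(i, k) eb i 0 k.
Local Notation Gc := (map_mx cR G).

Lemma row_Ee i : row i Ee = e i.
Proof. by apply/matrixP => a b; rewrite !mxE (ord1 a). Qed.
Lemma row_Eb i : row i Eb = eb i.
Proof. by apply/matrixP => a b; rewrite !mxE (ord1 a). Qed.

Lemma gc_entry p q (A : 'M[C]_(p, m)) (B : 'M[C]_(q, m)) i j :
  (A *m Gc *m B^T) i j = gc (row i A) (row j B).
Proof.
rewrite /bform !mxE; apply: eq_bigr => k _; rewrite !mxE; congr (_ * _).
by apply: eq_bigr => l _; rewrite !mxE.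
Qed.

(* (e, ebar) is a basis of C^m with g-dual basis (ebar, e), as a matrix
   identity: g(e_i, ebar_j) = delta_ij and g(e_i, e_j) = g(ebar_i, ebar_j) = 0
   make [Ee; Eb] invertible *)
Lemma frame_complete : Gc *m (Eb^T *m Ee + Ee^T *m Eb) = 1%:M.
Proof.
have dual : col_mx Ee Eb *m (Gc *m (col_mx Eb Ee)^T) = 1%:M.
  rewrite mulmxA tr_col_mx mul_col_mx mul_col_row scalar_mx_block.
  congr block_mx; apply/matrixP => i j; rewrite gc_entry !mxE ?row_Ee ?row_Eb.
  - exact: Hfr.2.
  - exact: (isotropic10 _ (Jc_e i)).
  - exact: (isotropic01 _ (Jc_eb i)).
  - by rewrite gc_sym Hfr.2 eq_sym.
have inv_comm p q (A : 'M[C]_(p, q)) B : p = q -> A *m B = 1%:M -> B *m A = 1%:M.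
  by move=> pq; subst q; apply: mulmx1C.
by have := inv_comm _ _ _ _ (addnn n) dual; rewrite -mulmxA tr_col_mx mul_row_col.
Qed.

Lemma frame_decomp v : v = \sum_i gc v (eb i) *: e i + \sum_i gc v (e i) *: eb i.
Proof.
rewrite {1}(_ : v = v *m (Gc *m (Eb^T *m Ee + Ee^T *m Eb))); last first.
  by rewrite frame_complete mulmx1.
rewrite !mulmxDr !mulmxA [_ *m Ee]mulmx_sum_row [_ *m Eb]mulmx_sum_row.
congr (_ + _); apply: eq_bigr => i _; rewrite ?row_Ee ?row_Eb; congr (_ *: _);
  by rewrite gc_entry ?row_Ee ?row_Eb; congr gc; apply/matrixP => a b; rewrite !mxE (ord1 a).
Qed.

Lemma frame_expand (f : 'rV[C]_m -> C) :
  (forall a x y, f (a *: x + y) = a * f x + f y) ->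
  forall v, f v = \sum_i gc v (eb i) * f (e i) + \sum_i gc v (e i) * f (eb i).
Proof.
move=> f_lin v; rewrite {1}(frame_decomp v).
have f_add x y : f (x + y) = f x + f y by rewrite -[x]scale1r f_lin mul1r scale1r.
by rewrite f_add !(linear_sum_scalar f_lin).
Qed.

Lemma frame_trace (M : 'M[C]_m) :
  \tr M = \sum_i gc (e i *m M) (eb i) + \sum_i gc (eb i *m M) (e i).
Proof.
have -> : \tr M = \tr (M *m (Gc *m (Eb^T *m Ee + Ee^T *m Eb))).
  by rewrite frame_complete mulmx1.
rewrite !mulmxDr mxtraceD !mulmxA.
rewrite mxtrace_mulC [\tr (_ *m Eb)]mxtrace_mulC !mulmxA /mxtrace.
by congr (_ + _); apply: eq_bigr => i _; rewrite gc_entry row_mul ?row_Ee ?row_Eb.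
Qed.

Lemma unimodular_frame x :
  \sum_i gc (br x (e i)) (eb i) + \sum_i gc (br x (eb i)) (e i) = 0.
Proof.
pose adC y : 'M[C]_m := \matrix_(k, l) (br y (delta_mx 0 k)) 0 l.
have br_adC v : br x v = v *m adC x.
  rewrite {1}(row_sum_delta v) (linear_sum (fun a y y' => bilinDr cR c a x y y')).
  rewrite mulmx_sum_row; apply: eq_bigr => k _; congr (_ *: _).
  by apply/matrixP => a b; rewrite !mxE (ord1 a).
have tr_adC : \tr (adC x) = 0.
  have adC_lin a y y' : \tr (adC (a *: y + y')) = a * \tr (adC y) + \tr (adC y').
    rewrite /mxtrace mulr_sumr -big_split; apply: eq_bigr => k _.
    by rewrite !mxE bilinDl !mxE.
  rewrite (row_sum_delta x) (linear_sum_scalar adC_lin); apply: big1 => i _.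
  have -> : adC 'e_i = map_mx cR (ad_mx c 'e_i).
    by apply/matrixP => k l; rewrite !mxE -!cplx_delta bilin_cplx mxE.
  by rewrite trace_map_mx Huni rmorph0 mulr0.
by rewrite -[RHS]tr_adC frame_trace; congr (_ + _); apply: eq_bigr => i _; rewrite br_adC.
Qed.

Definition Qcoef j k l := gc (br (eb j) (e k)) (eb l).
Definition Ccoef t s p := gc (br (e t) (e s)) (eb p).

Lemma Qcoef_conj j k l : Qcoef j k l = - (D k l j)^*.
Proof. by rewrite /Qcoef /Dcoef conj_gc cconj_br cconjK (br_anti (e k)) gcNl opprK. Qed.

(* The (1,1)-part of the Chern torsion vanishes. *)
Lemma torsion_frame k j : nab (e k) (eb j) = nab (eb j) (e k) + br (e k) (eb j).
Proof.
have := Hch.2.2 (e k) (e j) (Hfr.1 k) (Hfr.1 j); rewrite /torsion.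
by move/eqP; rewrite subr_eq0 subr_eq addrC => /eqP.
Qed.

(* nabla J = J nabla: the connection preserves types. *)
Lemma nab_type10 x k l : gc (nab x (e k)) (e l) = 0.
Proof. by apply: isotropic10; rewrite -nab_J Jc_e bilinZr. Qed.

Lemma nab_type01 x k l : gc (nab x (eb k)) (eb l) = 0.
Proof. by apply: isotropic01; rewrite -nab_J Jc_eb bilinZr. Qed.

Lemma chern_bar j k l : gc (nab (eb j) (e k)) (eb l) = Qcoef j k l.
Proof.
rewrite (_ : nab (eb j) (e k) = nab (e k) (eb j) - br (e k) (eb j)).
  by rewrite gcBl nab_type01 sub0r (br_anti (e k)) gcNl opprK.
by rewrite torsion_frame addrK.
Qed.

Lemma chern_hol i k l : gc (nab (e i) (e k)) (eb l) = D l k i.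
Proof.
have /eqP := nab_metric (e i) (e k) (eb l); rewrite addr_eq0 => /eqP ->.
rewrite torsion_frame gcDr (gc_sym _ (nab _ _)) nab_type10 add0r gc_sym.
by rewrite (br_anti (e i)) gcNl opprK.
Qed.

Lemma integrable_eigen (u v : C) :
  (-1) * u - 'i * v - 'i * v - u = 0 -> v = 'i * u.
Proof.
move=> E; have ii : ('i : C) * 'i = -1 by rewrite -expr2 sqrCi.
have key : 2%:R * (v - 'i * u) =
    'i * ((-1) * u - 'i * v - 'i * v - u) + 2%:R * v * (1 + 'i * 'i).
  by ring.
rewrite E ii addrN !mulr0 addr0 in key; move/eqP: key.
by rewrite mulf_eq0 pnatr_eq0 /= subr_eq0 => /eqP.
Qed.

(* Integrability: [e_t, e_s] is again of type (1,0). *)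
Lemma br_type10 t s p : gc (br (e t) (e s)) (e p) = 0.
Proof.
apply: isotropic10; have := br_integrable (e t) (e s).
rewrite !Jc_e !bilinZl !bilinZr !JcZ scalerA -expr2 sqrCi => h.
apply/rowP => k; have := congr1 (fun w => w 0 k) h; rewrite !mxE.
exact: integrable_eigen.
Qed.

Lemma gc_nab_linr x w a y y' :
  gc (nab x (a *: y + y')) w = a * gc (nab x y) w + gc (nab x y') w.
Proof. by rewrite bilinDr bformDl. Qed.
Lemma gc_nab_linl z w a y y' :
  gc (nab (a *: y + y') z) w = a * gc (nab y z) w + gc (nab y' z) w.
Proof. by rewrite bilinDl bformDl. Qed.
Lemma gc_br_linr x w a y y' :
  gc (br x (a *: y + y')) w = a * gc (br x y) w + gc (br x y') w.
Proof. by rewrite bilinDr bformDl. Qed.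

Lemma Rcoef_frame i r : Rcoef c Gam G e i i r r =
  \sum_l Qcoef i r l * D r l i - \sum_l D l r i * Qcoef i l r
  + \sum_p Qcoef i i p * D r r p + \sum_p D i p i * Qcoef p r r.
Proof.
have eA := @frame_expand (fun v => gc (nab (e i) v) (eb r)) (gc_nab_linr _ _)
  (nab (eb i) (e r)).
have eB := @frame_expand (fun v => gc (nab (eb i) v) (eb r)) (gc_nab_linr _ _)
  (nab (e i) (e r)).
have eC := @frame_expand (fun v => gc (nab v (e r)) (eb r)) (gc_nab_linl _ _)
  (br (e i) (eb i)).
rewrite /= in eA eB eC.
have termA : gc (nab (e i) (nab (eb i) (e r))) (eb r)
    = \sum_l Qcoef i r l * D r l i.
  rewrite eA [X in _ + X]big1 ?addr0; last by move=> l _; rewrite nab_type10 mul0r.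
  by apply: eq_bigr => l _; rewrite chern_bar chern_hol.
have termB : gc (nab (eb i) (nab (e i) (e r))) (eb r)
    = \sum_l D l r i * Qcoef i l r.
  rewrite eB [X in _ + X]big1 ?addr0; last by move=> l _; rewrite nab_type10 mul0r.
  by apply: eq_bigr => l _; rewrite chern_bar chern_hol.
have termC : gc (nab (br (e i) (eb i)) (e r)) (eb r)
    = - (\sum_p Qcoef i i p * D r r p + \sum_p D i p i * Qcoef p r r).
  rewrite eC opprD; apply: (f_equal2 +%R); rewrite -sumrN; apply: eq_bigr => l _.
    by rewrite chern_hol (br_anti (e i)) gcNl mulNr.
  by rewrite chern_bar (br_anti (e i)) gcNl mulNr.
by rewrite /Rcoef /curvature !gcBl termA termB termC opprK addrA; reflexivity.
Qed.

Lemma jacobi_frame t s :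
  \sum_p Ccoef t s p * Qcoef t p s - \sum_p Qcoef t s p * Ccoef t p s
  + \sum_p D t p s * Qcoef p t s - \sum_p Qcoef t t p * Ccoef p s s
  - \sum_p D t p t * Qcoef p s s = 0.
Proof.
have e1 := @frame_expand (fun v => gc (br (eb t) v) (eb s)) (gc_br_linr _ _)
  (br (e t) (e s)).
have e2 := @frame_expand (fun v => gc (br (e t) v) (eb s)) (gc_br_linr _ _)
  (br (e s) (eb t)).
have e3 := @frame_expand (fun v => gc (br (e s) v) (eb s)) (gc_br_linr _ _)
  (br (eb t) (e t)).
rewrite /= in e1 e2 e3.
have term1 : gc (br (eb t) (br (e t) (e s))) (eb s) = \sum_p Ccoef t s p * Qcoef t p s.
  rewrite e1 [X in _ + X]big1 ?addr0 //.
  by move=> p _; rewrite br_type10 mul0r.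
have term2 : gc (br (e t) (br (e s) (eb t))) (eb s)
    = - \sum_p Qcoef t s p * Ccoef t p s + \sum_p D t p s * Qcoef p t s.
  rewrite e2 -sumrN; apply: (f_equal2 +%R); apply: eq_bigr => p _.
    by rewrite (br_anti (e s)) gcNl mulNr.
  by rewrite (br_anti (e s)) gcNl (br_anti (e t)) gcNl mulrNN.
have term3 : gc (br (e s) (br (eb t) (e t))) (eb s)
    = - \sum_p Qcoef t t p * Ccoef p s s - \sum_p D t p t * Qcoef p s s.
  rewrite e3; apply: (f_equal2 +%R); rewrite -sumrN; apply: eq_bigr => p _.
    by rewrite (br_anti (e s)) gcNl mulrN.
  by rewrite (br_anti (e s)) gcNl mulrN.
have := congr1 (gc^~ (eb s)) (br_jacobi (eb t) (e t) (e s)).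
rewrite !gcDl gc0l term1 term2 term3 => jacobi_eb.
by rewrite -[RHS]jacobi_eb !addrA; reflexivity.
Qed.

Lemma unimodular_coef p : \sum_s Ccoef p s s = \sum_s D s s p.
Proof.
apply/eqP; rewrite -subr_eq0 -sumrN; apply/eqP.
rewrite -[RHS](unimodular_frame (e p)); apply: (f_equal2 +%R) => //.
by apply: eq_bigr => s _; rewrite (br_anti (e p)) gcNl.
Qed.

Lemma chern_scalar_DQ :
  chern_scalar c Gam G e = \sum_t \sum_r \sum_s D t r s * Qcoef r t s.
Proof.
rewrite /chern_scalar (eq_bigr _ (fun i _ => eq_bigr _ (fun r _ => Rcoef_frame i r))).
exact: (curvature_sum_DQ jacobi_frame unimodular_coef).
Qed.

Lemma chern_scalar_sym : (forall i j k, D j i k = D j k i) ->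
  chern_scalar c Gam G e = - \sum_r \sum_s \sum_t `|D t r s| ^+ 2.
Proof.
move=> Dsym; rewrite chern_scalar_DQ exchange_big -sumrN; apply: eq_bigr => r _.
rewrite exchange_big -sumrN; apply: eq_bigr => s _; rewrite -sumrN.
by apply: eq_bigr => t _; rewrite Qcoef_conj (Dsym s) mulrN normCK.
Qed.

Lemma chern_scalar_skew : (forall i j k, D j i k = - D j k i) ->
  chern_scalar c Gam G e = \sum_r \sum_s \sum_t `|D t r s| ^+ 2.
Proof.
move=> Dskew; rewrite chern_scalar_DQ exchange_big; apply: eq_bigr => r _.
rewrite exchange_big; apply: eq_bigr => s _; apply: eq_bigr => t _.
by rewrite Qcoef_conj (Dskew s) rmorphN opprK normCK.
Qed.

End ChernScalar.

Theorem lemma4 (R : rcfType) (n : nat)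
  (c : 'I_(n.*2) -> 'I_(n.*2) -> 'rV[R]_(n.*2))
  (J G : 'M[R]_(n.*2))
  (Gam : 'I_(n.*2) -> 'I_(n.*2) -> 'rV[R]_(n.*2))
  (e : 'I_n -> 'rV[R[i]]_(n.*2)) :
  is_lie_algebra c -> unimodular c ->
  almost_complex J -> nijenhuis_free c J -> J_inner_product J G ->
  is_chern c J G Gam -> unitary_frame J G e ->
  let D := Dcoef c G e in
  let s := chern_scalar c Gam G e in
  ((forall i j k, D j i k = D j k i) ->
     s = - (\sum_(r < n) \sum_(s0 < n) \sum_(t < n) `|D t r s0| ^+ 2) /\
     s <= 0 /\
     ((exists j i k, D j i k != 0) -> s < 0)) /\
  ((forall i j k, D j i k = - D j k i) ->
     s = \sum_(r < n) \sum_(s0 < n) \sum_(t < n) `|D t r s0| ^+ 2 /\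
     0 <= s /\
     ((exists j i k, D j i k != 0) -> 0 < s)).
Proof.
move=> Hlie Huni Hac Hnij Hip Hch Hfr D s; rewrite /D /s.
split=> [Dsym | Dskew].
- rewrite (chern_scalar_sym Hlie Huni Hac Hnij Hip Hch Hfr Dsym) oppr_le0 oppr_lt0.
  by split=> //; split; [apply: sum3_sqr_ge0 | apply: sum3_sqr_gt0].
- rewrite (chern_scalar_skew Hlie Huni Hac Hnij Hip Hch Hfr Dskew).
  by split=> //; split; [apply: sum3_sqr_ge0 | apply: sum3_sqr_gt0].
Qed.
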